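(* Let $P$ be a finite set of points in $\mathbb{R}^m$, let $(A,B)$ be an optimal 2-means partition of $P$, and let $S\subseteq A$ be the set of low-revenue points of $A$. Then for any $u,v\in S$, $d(u,v)\le\frac29\max\{d(u,\rho(A)),d(v,\rho(A))\}$.
   Context: Distances are Euclidean: $d(x,y)=\|x-y\|_2$. For finite nonempty $S$, $\rho(S)=\frac{1}{|S|}\sum_{u\in S}u$ and $\Delta_1(S)=\sum_{u\in S}d(u,\rho(S))^2$. A partition $(A,B)$ of $P$ into two nonempty sets is an optimal 2-means partition if it minimizes $\Delta_1(A)+\Delta_1(B)$ among all partitions of $P$ into two nonempty sets. For $i\in A$, $j\in B$, $rev(i,j)=\min\{d(i,j)/\max\{d(i,\rho(A)),d(j,\rho(B))\},\,1\}$ (equal to $1$ if the maximum is $0$). For $u\in A$, $HR_B(u)=\{v\in B: rev(u,v)\ge\frac{1}{10}\}$ and $LR_B(u)=B\setminus HR_B(u)$. A point $u\in A$ is a high-revenue point if $|HR_B(u)|\ge\frac12|B|$, and a low-revenue point otherwise. *)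

From HB Require Import structures.
From mathcomp Require Import all_boot all_order all_algebra finmap.
From mathcomp Require Import reals.
Set Implicit Arguments. Unset Strict Implicit. Unset Printing Implicit Defensive.
Import Order.TTheory GRing.Theory Num.Theory.
Local Open Scope ring_scope.
Local Open Scope fset_scope.

Section KMeans.
Variables (R : realType) (m : nat).
Notation pt := 'rV[R]_m.

Definition dist (x y : pt) : R :=
  Num.sqrt (\sum_(i < m) (x ord0 i - y ord0 i) ^+ 2).

Definition centroid (S : {fset pt}) : pt :=
  (#|` S|%:R)^-1 *: \sum_(u <- S) u.

Definition cost1 (S : {fset pt}) : R :=
  \sum_(u <- S) dist u (centroid S) ^+ 2.

Definition is_2partition (P A B : {fset pt}) : Prop :=
  [/\ A `|` B = P, A `&` B = fset0, A != fset0 & B != fset0].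

Definition optimal_2means (P A B : {fset pt}) : Prop :=
  is_2partition P A B /\
  forall A' B' : {fset pt}, is_2partition P A' B' ->
    (cost1 A + cost1 B <= cost1 A' + cost1 B')%R.

Definition revenue (A B : {fset pt}) (i j : pt) : R :=
  let M := Num.max (dist i (centroid A)) (dist j (centroid B)) in
  if M == 0 then 1 else Num.min (dist i j / M) 1.

Definition HR (A B : {fset pt}) (u : pt) : {fset pt} :=
  [fset v in B | (10%:R)^-1 <= revenue A B u v].

Definition high_revenue (A B : {fset pt}) (u : pt) : Prop :=
  (#|` B|%:R / 2%:R <= (#|` HR A B u|%:R : R))%R.

Definition low_revenue (A B : {fset pt}) (u : pt) : Prop :=
  u \in A /\ ~ high_revenue A B u.

End KMeans.

From HB Require Import structures.
From mathcomp Require Import all_boot all_order all_algebra finmap.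
From mathcomp Require Import reals.
From mathcomp Require Import ring lra zify.
Set Implicit Arguments. Unset Strict Implicit. Unset Printing Implicit Defensive.
Import Order.TTheory GRing.Theory Num.Theory.
Local Open Scope ring_scope.
Local Open Scope fset_scope.

(* Let u, v be low-revenue points of A.  Each of them has "low revenue" with
   respect to more than half of B, so by pigeonhole some w in B has low
   revenue with respect to both u and v.  Optimality of (A,B) forces
   d(w,rho(B)) <= d(w,rho(A)) (otherwise moving w into A lowers the cost,
   because the centroid minimises the sum of squared distances).  With this,
   rev(x,w) < 1/10 for x in A yields d(x,w) <= d(x,rho(A))/9 by the triangle
   inequality, and d(u,v) <= d(u,w) + d(w,v) gives the bound 2/9. *)

Section RealSums.
Variable R : realFieldType.
Local Open Scope ring_scope.

(* Cauchy-Schwarz for finite sums, via Lagrange's identity. *)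
Lemma cauchy_schwarz (I : finType) (a b : I -> R) :
  (\sum_i a i * b i) ^+ 2 <= (\sum_i a i ^+ 2) * (\sum_i b i ^+ 2).
Proof.
have lagrange_ge0 : 0 <= \sum_i \sum_j (a i * b j - a j * b i) ^+ 2.
  by apply: sumr_ge0 => i _; apply: sumr_ge0 => j _; apply: sqr_ge0.
have lagrange : \sum_i \sum_j (a i * b j - a j * b i) ^+ 2 =
   \sum_i \sum_j (a i ^+ 2 * b j ^+ 2) + \sum_i \sum_j (a j ^+ 2 * b i ^+ 2)
   - 2 * \sum_i \sum_j (a i * b i * (a j * b j)).
  rewrite mulr_sumr -big_split -sumrB /=; apply: eq_bigr => i _.
  by rewrite mulr_sumr -big_split -sumrB /=; apply: eq_bigr => j _; ring.
have swap : \sum_i \sum_j (a j ^+ 2 * b i ^+ 2) =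
            \sum_i \sum_j (a i ^+ 2 * b j ^+ 2) by rewrite exchange_big.
have prod_sums : (\sum_i a i ^+ 2) * (\sum_i b i ^+ 2) =
                 \sum_i \sum_j (a i ^+ 2 * b j ^+ 2).
  by rewrite mulr_suml; apply: eq_bigr => i _; rewrite mulr_sumr.
have square_sum : (\sum_i a i * b i) ^+ 2 =
                  \sum_i \sum_j (a i * b i * (a j * b j)).
  by rewrite expr2 mulr_suml; apply: eq_bigr => i _; rewrite mulr_sumr.
rewrite prod_sums square_sum; rewrite lagrange swap in lagrange_ge0; lra.
Qed.

(* The mean mu of finitely many reals f x minimises sum (f x - c)^2 over c:
   the difference of the two sums is |S| (mu - c)^2. *)
Lemma mean_minimises_sq (T : choiceType) (S : {fset T}) (f : T -> R) (mu c : R) :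
  \sum_(x <- S) f x = #|`S|%:R * mu ->
  \sum_(x <- S) (f x - mu) ^+ 2 <= \sum_(x <- S) (f x - c) ^+ 2.
Proof.
move=> sum_f; rewrite -subr_ge0 -sumrB.
have -> : \sum_(x <- S) ((f x - c) ^+ 2 - (f x - mu) ^+ 2) =
    \sum_(x <- S) (2 * (mu - c) * f x) + \sum_(x <- S) ((c ^+ 2 - mu ^+ 2) * 1).
  by rewrite -big_split; apply: eq_bigr => x _ /=; ring.
rewrite -!mulr_sumr sum_f.
have -> : \sum_(x <- S) (1 : R) = #|`S|%:R by rewrite card_fset_sum1 natr_sum.
have -> : 2 * (mu - c) * (#|`S|%:R * mu) + (c ^+ 2 - mu ^+ 2) * #|`S|%:R
   = #|`S|%:R * (mu - c) ^+ 2 by ring.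
by rewrite mulr_ge0 ?ler0n ?sqr_ge0.
Qed.

End RealSums.

Section Euclid.
Variables (R : realType) (m : nat).
Notation pt := 'rV[R]_m.
Local Open Scope ring_scope.

Definition sqdist (x y : pt) : R := \sum_(i < m) (x ord0 i - y ord0 i) ^+ 2.

Lemma sqdist_ge0 (x y : pt) : 0 <= sqdist x y.
Proof. by apply: sumr_ge0 => i _; apply: sqr_ge0. Qed.

Lemma dist_sq (x y : pt) : dist x y ^+ 2 = sqdist x y.
Proof. by rewrite /dist sqr_sqrtr // sqdist_ge0. Qed.

Lemma dist_ge0 (x y : pt) : 0 <= dist x y.
Proof. exact: sqrtr_ge0. Qed.

Lemma distC (x y : pt) : dist x y = dist y x.
Proof. by rewrite /dist; congr Num.sqrt; apply: eq_bigr => i _; rewrite -sqrrN opprB. Qed.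

Lemma dist_xx (x : pt) : dist x x = 0.
Proof. by rewrite /dist big1 ?sqrtr0 // => i _; rewrite subrr expr0n. Qed.

(* Triangle inequality: compare squares, bounding the cross term by
   Cauchy-Schwarz. *)
Lemma dist_triangle (x y z : pt) : dist x z <= dist x y + dist y z.
Proof.
set cross := \sum_i (x ord0 i - y ord0 i) * (y ord0 i - z ord0 i).
have expand : sqdist x z = sqdist x y + sqdist y z + 2 * cross.
  by rewrite /sqdist mulr_sumr -!big_split /=; apply: eq_bigr => i _; ring.
have cross_le : cross <= dist x y * dist y z.
  rewrite /dist -sqrtrM ?sqdist_ge0 // (le_trans (ler_norm cross)) //.
  by rewrite -sqrtr_sqr ler_sqrt ?mulr_ge0 ?sqdist_ge0 // cauchy_schwarz.
rewrite -[dist x y + dist y z]ger0_norm ?addr_ge0 ?dist_ge0 //.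
rewrite -sqrtr_sqr /dist ler_sqrt ?sqr_ge0 //.
rewrite -/(sqdist x z) expand sqrrD -!/(dist _ _) !dist_sq; lra.
Qed.

Lemma sum_coord_centroid (S : {fset pt}) i :
  \sum_(u <- S) u ord0 i = #|`S|%:R * centroid S ord0 i.
Proof.
rewrite /centroid mxE summxE.
have [/eqP/cardfs0_eq -> | nz] := boolP (#|`S| == 0)%N.
  by rewrite big_seq_fset0 mul0r.
by rewrite mulrA mulfV ?mul1r // pnatr_eq0.
Qed.

Lemma cost1_le (S : {fset pt}) (c : pt) :
  cost1 S <= \sum_(u <- S) dist u c ^+ 2.
Proof.
rewrite /cost1; under eq_bigr do rewrite dist_sq.
under [X in _ <= X]eq_bigr do rewrite dist_sq.
rewrite /sqdist exchange_big [X in _ <= X]exchange_big /=.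
apply: ler_sum => i _.
exact: mean_minimises_sq (sum_coord_centroid S i).
Qed.

(* In an optimal 2-means partition every point of B is at least as close to
   rho(B) as to rho(A): otherwise moving it to A strictly lowers the cost
   (if it is the only point of B it is its own centroid). *)
Lemma optimal_closer_own_centroid (P A B : {fset pt}) (w : pt) :
  optimal_2means P A B -> w \in B ->
  dist w (centroid B) <= dist w (centroid A).
Proof.
case=> [[PAB disjAB _ _] opt] wB.
have wA : w \notin A.
  by apply/negP => wA; have := in_fsetI A B w; rewrite disjAB wA wB in_fset0.
have [/eqP Bw0 | Bw_ne] := boolP (B `\ w == fset0).
  have cardB : #|`B| = 1%N by rewrite (cardfsD1 w B) wB Bw0 cardfs0.
  have sumB : \sum_(u <- B) u = w.
    by rewrite (big_fsetD1 _ wB) Bw0 big_seq_fset0 Monoid.mulm1.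
  by rewrite /centroid cardB sumB invr1 scale1r dist_xx dist_ge0.
have moved : is_2partition P (w |` A) (B `\ w).
  split=> //; last by apply/fset0Pn; exists w; rewrite !inE eqxx.
  - rewrite -PAB; apply/fsetP => x; rewrite !inE.
    by case: eqVneq => [->|_] /=; rewrite ?wB ?orbT.
  - apply/fsetP => x; rewrite !inE; case: eqVneq => [->|_] //=.
    by rewrite -in_fsetI disjAB.
have cost_moved := opt _ _ moved.
have costA : cost1 (w |` A) <= dist w (centroid A) ^+ 2 + cost1 A.
  by have := cost1_le (w |` A) (centroid A); rewrite big_fsetU1.
have costB : cost1 B =
    dist w (centroid B) ^+ 2 + \sum_(u <- B `\ w) dist u (centroid B) ^+ 2.
  by rewrite /cost1 (big_fsetD1 _ wB).
have costBw := cost1_le (B `\ w) (centroid B).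
have sq_le : dist w (centroid B) ^+ 2 <= dist w (centroid A) ^+ 2 by lra.
by rewrite -(ler_pXn2r (n:=2)) // nnegrE dist_ge0.
Qed.

(* A point w of B outside HR_B(x) is within d(x,rho(A))/9 of x: the
   normaliser of rev(x,w) is at most d(x,w) + d(x,rho(A)) by the previous
   lemma and the triangle inequality, and rev(x,w) < 1/10. *)
Lemma low_revenue_close (P A B : {fset pt}) (x w : pt) :
  optimal_2means P A B -> w \in B -> w \notin HR A B x ->
  dist x w <= dist x (centroid A) / 9%:R.
Proof.
move=> opt wB; rewrite /HR !inE wB /= -ltNge /revenue.
have closer := optimal_closer_own_centroid opt wB.
have tri := dist_triangle w x (centroid A); rewrite (distC w x) in tri.
have dA0 := dist_ge0 x (centroid A); have dw0 := dist_ge0 x w.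
set M := Num.max _ _.
have M_ge : dist x (centroid A) <= M by rewrite le_max lexx.
have M_le : M <= dist x w + dist x (centroid A) by rewrite ge_max; apply/andP; split; lra.
case: eqP => [_ | /eqP M_neq0]; first lra.
have M_gt0 : 0 < M by rewrite lt_def M_neq0; lra.
by rewrite gt_min ltr_pdivrMr // => /orP [] ?; lra.
Qed.

End Euclid.

Lemma common_point_outside (T : choiceType) (B X Y : {fset T}) :
  (#|`X| + #|`Y| < #|`B|)%N -> exists w, [/\ w \in B, w \notin X & w \notin Y].
Proof.
move=> small; have [/eqP rest0 | /fset0Pn [w]] := boolP (B `\` (X `|` Y) == fset0).
  have /fsubset_leq_card coverB : B `<=` X `|` Y by rewrite -fsetD_eq0 rest0.
  by move: (leq_trans coverB (leq_card_fsetU X Y).1); rewrite leqNgt small.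
by rewrite !inE negb_or => /andP [/andP [wX wY] wB]; exists w.
Qed.

Lemma low_revenue_card (R : realType) (m : nat) (A B : {fset 'rV[R]_m}) (u : 'rV[R]_m) :
  low_revenue A B u -> (#|`HR A B u| * 2 < #|`B|)%N.
Proof.
by case=> _ /negP; rewrite -ltNge ltr_pdivlMr ?ltr0n // -natrM ltr_nat.
Qed.

Theorem mainTheorem5 (R : realType) (m : nat) (P A B : {fset 'rV[R]_m}) :
  optimal_2means P A B ->
  forall u v : 'rV[R]_m,
    low_revenue A B u -> low_revenue A B v ->
    dist u v <= (2%:R / 9%:R) *
                Num.max (dist u (centroid A)) (dist v (centroid A)).
Proof.
move=> opt u v low_u low_v.
have few : (#|`HR A B u| + #|`HR A B v| < #|`B|)%N.
  move: (low_revenue_card low_u) (low_revenue_card low_v); lia.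
have [w [wB wu wv]] := common_point_outside few.
have close_u := low_revenue_close opt wB wu.
have close_v := low_revenue_close opt wB wv.
have tri := dist_triangle u w v; rewrite (distC w v) in tri.
have max_u : dist u (centroid A) <= Num.max (dist u (centroid A)) (dist v (centroid A))
  by rewrite le_max lexx.
have max_v : dist v (centroid A) <= Num.max (dist u (centroid A)) (dist v (centroid A))
  by rewrite le_max lexx orbT.
lra.
Qed.
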